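(* Let $G$ be a graph with vertex set $[n]$ and let $P$ be a monomial in $\mathcal E_G$. Then $P$ is simple if and only if $P$ has no repeated variables and $\operatorname{supp}(P)$ has no cycles. Moreover, if $P$ is simple, then $\Pi(P)$ is the set partition of $[n]$ given by the cycles of $\sigma_P$.
   Context: The Fomin–Kirillov algebra $\mathcal E_n$ is the quadratic $\mathbf Q$-algebra with generators $x_{ij}=-x_{ji}$ for distinct $i,j\in[n]$, subject to the relations: $x_{ij}^2=0$ for distinct $i,j$; $x_{ij}x_{kl}=x_{kl}x_{ij}$ for distinct $i,j,k,l$; and $x_{ij}x_{jk}+x_{jk}x_{ki}+x_{ki}x_{ij}=0$ for distinct $i,j,k$. For a graph $G$ on vertex set $[n]$, $\mathcal E_G$ is the subalgebra of $\mathcal E_n$ generated by the $x_{ij}$ with $\overline{ij}$ an edge of $G$. A monomial is a product $P=x_{i_1j_1}\cdots x_{i_dj_d}$ of generators (with edges in $G$); its degree is $d(P)=d$; its $S_n$-degree is $\sigma_P=(i_1\;j_1)\cdots(i_d\;j_d)\in S_n$; $\operatorname{supp}(P)$ is the subgraph of $G$ (on vertex set $[n]$) whose edges are the $\overline{ij}$ with $x_{ij}$ appearing in $P$; and $\Pi(P)$ is the set partition of $[n]$ into the vertex sets of the connected components of $\operatorname{supp}(P)$. A monomial $P$ is called simple if $\sigma_P$ has exactly $n-d(P)$ cycles (counting fixed points). *)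

From mathcomp Require Import all_boot all_fingroup.
Set Implicit Arguments. Unset Strict Implicit. Unset Printing Implicit Defensive.

(* Vertex set [n] is 'I_n.  A graph G is a symmetric irreflexive relation.
   A monomial P = x_{i1 j1} ... x_{id jd} is recorded as its word of ordered
   pairs [:: (i1,j1); ...; (id,jd)]. *)
Section FK.
Variable n : nat.
Implicit Types (G : rel 'I_n) (P : seq ('I_n * 'I_n)).

Definition is_monomial G P : Prop :=
  forall e, e \in P -> (e.1 != e.2) && G e.1 e.2.

Definition mdeg P : nat := size P.

Definition sigma P : {perm 'I_n} := \prod_(e <- P) tperm e.1 e.2.

Definition is_simple P : Prop := #|porbits (sigma P)| + mdeg P = n.

(* the variable x_ij = -x_ji corresponds to the unordered edge {i,j} *)
Definition var_of (e : 'I_n * 'I_n) : {set 'I_n} := [set e.1; e.2].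

Definition no_repeated_vars P : Prop := uniq (map var_of P).

Definition supp P : rel 'I_n :=
  fun x y => has (fun e => ((e.1 == x) && (e.2 == y)) || ((e.1 == y) && (e.2 == x))) P.

Definition has_cycle (E : rel 'I_n) : Prop :=
  exists s : seq 'I_n, [/\ uniq s, 3 <= size s & path.cycle E s].

Definition Pi P : {set {set 'I_n}} :=
  [set [set y | connect (supp P) x y] | x : 'I_n].
End FK.

From mathcomp Require Import all_boot all_fingroup.
From mathcomp Require Import zify.
Set Implicit Arguments. Unset Strict Implicit. Unset Printing Implicit Defensive.

(* Multiplying a permutation by a transposition (a b) merges the cycles of a
   and b if they differ and splits their common cycle otherwise.  Hence
   sigma_P = (a b) sigma_Q, for P = x_ab Q, has at least n - d(P) cycles, with
   equality iff Q is simple and a, b lie in different cycles of sigma_Q.  Since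
   merging only glues cycles, for simple Q every edge of supp(Q) stays inside a
   cycle of sigma_Q, and the cycles of sigma_Q are the components of supp(Q).
   So P is simple iff each letter joins two components of the support of the
   letters after it, which is exactly the inductive description of a forest
   whose edges are all distinct. *)

Section TpermOrbits.
Variable T : finType.
Implicit Types (s : {perm T}) (a b x : T).

Lemma card_porbits1 : #|porbits (1 : {perm T})| = #|T|.
Proof.
rewrite card_imset // => x y /setP/(_ x); rewrite porbit_id.
by case/esym/porbitP=> i ->; rewrite expg1n perm1.
Qed.

Lemma notin_porbit_neq s a b : a \notin porbit s b -> a != b.
Proof. by apply: contraNneq => ->; apply: porbit_id. Qed.

(* Adding [porbits_mul_tperm] for [s] and for [tperm a b * s] leaves exactly
   one of the two memberships true. *)
Lemma porbit_mul_tperm s a b :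
  a != b -> (a \in porbit (tperm a b * s) b) = (a \notin porbit s b).
Proof.
move=> ab; have := porbits_mul_tperm s a b.
have := porbits_mul_tperm (tperm a b * s) a b; rewrite /= tpermKg ab.
by case: (a \in porbit _ b); case: (a \in porbit _ b) => /=; lia.
Qed.

Lemma porbit_sub_mul_tperm s a b x :
  a \notin porbit s b -> porbit s x \subset porbit (tperm a b * s) x.
Proof.
move=> ab_s; set u := (tperm a b * s)%g.
have ab := notin_porbit_neq ab_s.
have ab_u : a \in porbit u b by rewrite porbit_mul_tperm.
have tperm_u y : tperm a b y \in porbit u y.
  case: tpermP => [->|->|_ _]; last exact: porbit_id.
    by rewrite porbit_sym.
  exact: ab_u.
have step y : s y \in porbit u y.
  have -> : s y = u (tperm a b y) by rewrite permM tpermK.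
  move: (tperm_u y); rewrite -eq_porbit_mem => /eqP <-.
  by rewrite -{1}(expg1 u) mem_porbit.
apply/subsetP=> _ /porbitP[i ->]; elim: i => [|i IH].
  by rewrite expg0 perm1 porbit_id.
by move: IH; rewrite expgSr permM -!eq_porbit_mem => /eqP <-; rewrite eq_porbit_mem.
Qed.

End TpermOrbits.

Lemma set2_eq (T : finType) (u v a b : T) :
  ([set u; v] == [set a; b]) = ((u == a) && (v == b) || (u == b) && (v == a)).
Proof.
apply/eqP/idP => [/setP E | /orP[] /andP[/eqP -> /eqP ->] //]; last exact: setUC.
have /set2P[] : u \in [set a; b] by rewrite -E set21.
all: have /set2P[] : v \in [set a; b] by rewrite -E set22.
all: have /set2P[] : a \in [set u; v] by rewrite E set21.
all: have /set2P[] : b \in [set u; v] by rewrite E set22.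
all: by move=> *; subst; rewrite ?eqxx ?orbT.
Qed.

Lemma all_predC1 (T : eqType) (a : T) (s : seq T) : a \notin s -> all (predC1 a) s.
Proof. by move=> a_s; apply/allP=> x xs; apply: contraNneq a_s => <-. Qed.

Section Monomials.
Variable n : nat.
Implicit Types (P : seq ('I_n * 'I_n)) (a b c d x y : 'I_n).

Definition loopless P : bool := all (fun e : 'I_n * 'I_n => e.1 != e.2) P.

Lemma sigma_cons a b P : sigma ((a, b) :: P) = (tperm a b * sigma P)%g.
Proof. by rewrite /sigma big_cons. Qed.

Lemma supp_cons a b P x y : supp ((a, b) :: P) x y =
  ((a == x) && (b == y) || (a == y) && (b == x)) || supp P x y.
Proof. by []. Qed.

Lemma supp_sym P : symmetric (supp P).
Proof. by move=> x y; apply: eq_has => e; rewrite orbC. Qed.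

Lemma supp_subrel_cons a b P : subrel (supp P) (supp ((a, b) :: P)).
Proof. by move=> x y sPxy; rewrite supp_cons sPxy orbT. Qed.

Lemma connect_supp_sigma P x : connect (supp P) x (sigma P x).
Proof.
elim: P x => [|[a b] P IH] x; first by rewrite /sigma big_nil perm1 connect0.
rewrite sigma_cons permM; apply: (connect_trans (y := tperm a b x)).
  case: tpermP => [->|->|_ _]; last exact: connect0.
    by apply: connect1; rewrite supp_cons !eqxx.
  by apply: connect1; rewrite supp_cons !eqxx orbT.
by apply: connect_sub (IH _) => u v /supp_subrel_cons/connect1.
Qed.

Lemma porbit_sigma_connect P x y : y \in porbit (sigma P) x -> connect (supp P) x y.
Proof.
case/porbitP=> i ->; rewrite permX; elim: i => [|i IH]; first exact: connect0.
by rewrite iterS; apply: connect_trans IH (connect_supp_sigma _ _).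
Qed.

Lemma card_porbits_sigma_ge P : n <= #|porbits (sigma P)| + mdeg P.
Proof.
elim: P => [|[a b] P IH]; first by rewrite /sigma big_nil card_porbits1 card_ord addn0.
have := porbits_mul_tperm (sigma P) a b; rewrite /= -sigma_cons.
case: (boolP (a \notin _)) => [/notin_porbit_neq -> | _] /=;
  by move: IH; rewrite /mdeg /=; case: (a != b) => /=; lia.
Qed.

Lemma simple_cons a b P :
  is_simple ((a, b) :: P) <-> is_simple P /\ a \notin porbit (sigma P) b.
Proof.
have := card_porbits_sigma_ge P; have := card_porbits_sigma_ge ((a, b) :: P).
have := porbits_mul_tperm (sigma P) a b; rewrite /= -sigma_cons /is_simple /mdeg /=.
case: (boolP (a \notin _)) => [/notin_porbit_neq -> | _] /=;
  by case: (a != b) => /=; split=> [|[]]; lia.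
Qed.

Lemma simple_porbit_edge P :
  is_simple P -> {in P, forall e, e.2 \in porbit (sigma P) e.1}.
Proof.
elim: P => [|[a b] P IH] // /simple_cons[/IH sP ab_s] e.
rewrite sigma_cons inE => /predU1P[-> | /sP eP].
  by rewrite /= porbit_sym porbit_mul_tperm // (notin_porbit_neq ab_s).
exact: (subsetP (porbit_sub_mul_tperm _ ab_s)).
Qed.

Lemma simple_porbit P x :
  is_simple P -> porbit (sigma P) x = [set y | connect (supp P) x y].
Proof.
move=> sP; apply/setP=> y; rewrite inE; apply/idP/idP; first exact: porbit_sigma_connect.
have closedP : closed (supp P) (porbit (sigma P) x).
  move=> u v /hasP[e /(simple_porbit_edge sP)].
  rewrite porbit_sym -eq_porbit_mem => /eqP same.
  by case/orP=> /andP[/eqP <- /eqP <-]; rewrite -!eq_porbit_mem same.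
by move/(closed_connect closedP); rewrite porbit_id.
Qed.

Lemma mem_var_of_supp a b P : (var_of (a, b) \in map (@var_of n) P) = supp P a b.
Proof.
apply/mapP/hasP => [[e eP /esym/eqP] | [e eP]].
  by rewrite /var_of set2_eq; exists e.
by rewrite -set2_eq => /eqP E; exists e.
Qed.

Lemma supp_cons_avoid a b P x y :
  x != a -> y != a -> supp ((a, b) :: P) x y = supp P x y.
Proof. by move=> xa ya; rewrite supp_cons ![a == _]eq_sym (negbTE xa) (negbTE ya). Qed.

Lemma supp_cons_from_neq a b P y : y != b -> supp ((a, b) :: P) a y = supp P a y.
Proof.
move=> yb; rewrite supp_cons eqxx /= (eq_sym b) (negbTE yb) /=.
by case: (eqVneq a y) => [->|_] //=; rewrite eq_sym (negbTE yb).
Qed.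

Lemma has_cycle_supp_cons a b P :
  a != b -> ~~ supp P a b -> connect (supp P) a b -> has_cycle (supp ((a, b) :: P)).
Proof.
move=> ab sPab /connectP[_ /shortenP[p pP uap _] def_b]; subst b.
have size_p : 1 < size p.
  by case: p pP uap ab sPab => [|c [|d p]] //=; rewrite ?eqxx // andbT => ->.
exists (a :: p); split=> //.
rewrite /path.cycle rcons_path (sub_path (@supp_subrel_cons a _ P)) //.
by rewrite supp_cons !eqxx orbT.
Qed.

Lemma supp_cons_avoid_in a b P :
  {in predC1 a &, subrel (supp ((a, b) :: P)) (supp P)}.
Proof. by move=> x y xa ya; rewrite supp_cons_avoid. Qed.

Lemma cycle_supp_cons_at a b P c p d :
  path.cycle (supp ((a, b) :: P)) (a :: c :: rcons p d) -> uniq (a :: c :: rcons p d) ->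
  [/\ c != b -> supp P a c, path (supp P) c (rcons p d) & d != b -> supp P d a].
Proof.
rewrite /path.cycle rcons_path -rcons_cons last_rcons => /andP[/andP[sac sp] sda] /andP[a_p _].
split=> [cb | | db]; first by rewrite -(supp_cons_from_neq _ _ cb).
  move: sp; apply: sub_in_path; [exact: supp_cons_avoid_in | exact: all_predC1].
by rewrite supp_sym -(supp_cons_from_neq _ _ db) supp_sym.
Qed.

Lemma acyclic_supp_cons a b P :
  ~ has_cycle (supp P) -> ~~ connect (supp P) a b -> ~ has_cycle (supp ((a, b) :: P)).
Proof.
move=> acP nab [s [us ss cs]].
have [a_s | a_s] := boolP (a \in s); last first.
  apply: acP; exists s; split=> //.
  move: cs; apply: sub_in_cycle; [exact: supp_cons_avoid_in | exact: all_predC1].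
(* Rotate the cycle to a :: c :: ... :: d: if c or d is b, the rest of the
   cycle joins a and b in supp P; otherwise the whole cycle lies in supp P. *)
case: (rot_to a_s) => i s' def_s.
move: us ss cs; rewrite -(rot_uniq i) -(size_rot i) -(rot_cycle i) def_s.
case: s' {def_s} => [|c q] //; case/lastP: q => [|p d] // us _ cs.
have [sac sp sda] := cycle_supp_cons_at cs us.
have cd : c != d.
  by apply: contraTneq us => ->; rewrite /= mem_rcons mem_head andbF.
have [cb | cb] := eqVneq c b.
  move/negP: nab; apply; rewrite (sym_connect_sym (@supp_sym P)) -cb.
  apply/connectP; exists (rcons (rcons p d) a); last by rewrite last_rcons.
  by rewrite rcons_path sp last_rcons sda // -cb eq_sym.
have [db | db] := eqVneq d b.
  move/negP: nab; apply; apply/connectP.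
  by exists (c :: rcons p d); rewrite /= ?last_rcons ?sac ?sp.
apply: acP; exists [:: a, c & rcons p d]; split=> //.
  by rewrite /= size_rcons.
by rewrite /path.cycle rcons_path -rcons_cons last_rcons /= sac ?sp ?sda.
Qed.

Lemma has_cycle_subrel (E E' : rel 'I_n) : subrel E E' -> has_cycle E -> has_cycle E'.
Proof. by move=> EE' [s [us ss cs]]; exists s; split=> //; apply: sub_cycle cs. Qed.

Lemma forest_cons a b P : a != b ->
  (no_repeated_vars ((a, b) :: P) /\ ~ has_cycle (supp ((a, b) :: P))) <->
  (no_repeated_vars P /\ ~ has_cycle (supp P)) /\ ~~ connect (supp P) a b.
Proof.
move=> ab; rewrite /no_repeated_vars /= mem_var_of_supp.
split=> [[/andP[nsab uP] acyc] | [[uP acP] nab]].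
  have acP : ~ has_cycle (supp P).
    by move/(has_cycle_subrel (@supp_subrel_cons a b P)).
  by split=> //; apply/negP => /(has_cycle_supp_cons ab nsab).
split; last exact: acyclic_supp_cons.
by rewrite uP andbT; apply: contra nab => /connect1.
Qed.

Lemma simple_iff_forest P :
  loopless P -> is_simple P <-> no_repeated_vars P /\ ~ has_cycle (supp P).
Proof.
elim: P => [_ | [a b] P IH /andP[/= ab /IH {}IH]].
  split=> _; last by rewrite /is_simple /mdeg /sigma big_nil card_porbits1 card_ord addn0.
  by split=> // -[[|x p] [_ _]] //; rewrite /path.cycle rcons_path /= andbF.
rewrite simple_cons (forest_cons P ab) -IH.
by split=> -[sP ab_s]; move: ab_s; rewrite (simple_porbit _ sP) inE
  (sym_connect_sym (@supp_sym P)).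
Qed.

End Monomials.

Theorem proposition2p4 (n : nat) (G : rel 'I_n)
    (HGsym : symmetric G) (HGirr : irreflexive G)
    (P : seq ('I_n * 'I_n)) (HP : is_monomial G P) :
  (is_simple P <-> no_repeated_vars P /\ ~ has_cycle (supp P)) /\
  (is_simple P -> Pi P = porbits (sigma P)).
Proof.
(* Of the graph G only the looplessness of the letters of P matters. *)
have loopP : loopless P by apply/allP => e /HP /andP[].
split; first exact: simple_iff_forest.
by move=> sP; apply: eq_imset => x; rewrite (simple_porbit _ sP).
Qed.
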